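(* Let $n\ge2$ and let $H$ be a subgraph of the complete graph $K_n$ on vertex set $\{1,\dots,n\}$. Let $H^*$ be the subgraph of the shift graph $S_n$ induced by the vertices $(a,b)$, $a<b$, such that $\{a,b\}$ is an edge of $H$. Then (1) $\chi(H^* )\ge\log_2\chi(H)$, and (2) the odd-girth of $H^*$ is strictly larger than the odd-girth of $H$.
   Context: The shift graph $S_n$ has vertex set $\{(a,b):1\le a<b\le n\}$, two vertices $(a,b)$ and $(a',b')$ adjacent if and only if $b=a'$ or $b'=a$. The odd-girth of a graph is the length of its shortest odd cycle (infinite if bipartite); the convention is that infinity is strictly larger than infinity is not needed, i.e., if $H$ is bipartite then $H^*$ is bipartite. *)

From Stdlib Require Import Reals.
From mathcomp Require Import all_boot.
Set Implicit Arguments. Unset Strict Implicit. Unset Printing Implicit Defensive.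

(* A simple graph on a finite vertex type T is a relation e : rel T
   (symmetry / irreflexivity are stated as hypotheses where needed). *)

Definition colorable (T : finType) (e : rel T) (k : nat) : bool :=
  [exists f : {ffun T -> 'I_k}, [forall x, [forall y, e x y ==> (f x != f y)]]].

(* Chromatic number: the least k such that e is k-colourable
   (k = #|T| always works when e is irreflexive). *)
Definition chi (T : finType) (e : rel T) : nat :=
  find (colorable e) (iota 0 #|T|.+1).

Definition has_cycle_len (T : finType) (e : rel T) (k : nat) : bool :=
  (2 < k) &&
  [exists f : {ffun 'I_k -> T},
     injectiveb f && [forall i : 'I_k, e (f i) (f (ordS i))]].

Definition has_odd_cycle_len (T : finType) (e : rel T) (k : nat) : bool :=
  odd k && has_cycle_len e k.

(* Odd girth: length of a shortest odd cycle, None (= infinity) if there is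
   none.  A cycle has at most #|T| vertices, so searching k <= #|T| suffices. *)
Definition odd_girth (T : finType) (e : rel T) : option nat :=
  let k := find (has_odd_cycle_len e) (iota 0 #|T|.+1) in
  if k <= #|T| then Some k else None.

(* Strict order on nat extended with infinity (None), with the paper's
   convention: if the second argument is infinite, "first > second" means
   the first is infinite too. *)
Definition og_gt (a b : option nat) : Prop :=
  match a, b with
  | None, _ => True
  | Some _, None => False
  | Some x, Some y => y < x
  end.

Definition star_vertex (n : nat) (H : rel 'I_n) :=
  {p : 'I_n * 'I_n | (p.1 < p.2) && H p.1 p.2}.

Definition star_adj (n : nat) (H : rel 'I_n) : rel (star_vertex H) :=
  fun u v => ((sval u).2 == (sval v).1) || ((sval v).2 == (sval u).1).

Definition log2R (x : Rdefinitions.R) : Rdefinitions.R := Rdiv (ln x) (ln 2).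
Arguments star_adj {n} H.

From Stdlib Require Import Reals Lra.
From mathcomp Require Import all_boot zify.
Set Implicit Arguments.
Unset Strict Implicit.
Unset Printing Implicit Defensive.

(* (1) Colour H^* properly with c colours and give each vertex x of H the set
   of colours of the pairs (a, x).  For an edge x < y of H the colour of (x, y)
   is in the set of y but not in the set of x, because (x, y) is adjacent to
   every (a, x); hence chi(H) <= 2^c.
   (2) Go around an odd cycle (A_m, B_m), m < k, of H^*.  Consecutive pairs are
   linked forward (B_m = A_{m+1}) or backward (B_{m+1} = A_m).  Following B_m
   after a forward link and A_m after a backward one gives a closed walk in H
   that moves exactly when the link type does not change.  The link type changes
   an even, and positive, number of times (were it constant, A_m or B_m would be
   strictly monotone around the cycle), so the walk has odd length < k and
   contains an odd cycle of H of length < k. *)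

Section Chromatic.
Variables (T : finType) (e : rel T).

Lemma chi_le k : colorable e k -> chi e <= k.
Proof.
move=> col_k; rewrite /chi; case: (leqP k #|T|) => [le_k_T | lt_T_k].
  rewrite leqNgt; apply/negP => /(before_find 0).
  by rewrite nth_iota ?add0n ?col_k.
by apply: leq_trans (find_size _ _) _; rewrite size_iota.
Qed.

Lemma chi_le_card (U : finType) (h : T -> U) :
  (forall x y, e x y -> h x != h y) -> chi e <= #|U|.
Proof.
move=> proper_h; apply: chi_le; apply/existsP; exists [ffun x => enum_rank (h x)].
apply/forallP => x; apply/forallP => y; apply/implyP => exy; rewrite !ffunE.
by apply: contra (proper_h _ _ exy) => /eqP /enum_rank_inj ->.
Qed.

Hypothesis eirr : irreflexive e.

Lemma colorable_card : colorable e #|T|.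
Proof.
apply/existsP; exists [ffun x => enum_rank x].
apply/forallP => x; apply/forallP => y; apply/implyP => exy; rewrite !ffunE.
by apply: contraTneq exy => /enum_rank_inj ->; rewrite eirr.
Qed.

Lemma chi_colorable : colorable e (chi e).
Proof.
have has_col : has (colorable e) (iota 0 #|T|.+1).
  by apply/hasP; exists #|T|; [rewrite mem_iota add0n leqnn | exact: colorable_card].
have := has_col; rewrite has_find size_iota => lt_chi.
by have := nth_find 0 has_col; rewrite nth_iota.
Qed.

Lemma chi_gt0 (x : T) : 0 < chi e.
Proof.
rewrite lt0n; apply: contraTneq chi_colorable => ->.
by apply/negP => /existsP [f _]; case: (f x).
Qed.

End Chromatic.

Lemma has_cycle_len_le_card (T : finType) (e : rel T) l : has_cycle_len e l -> l <= #|T|.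
Proof.
case/andP=> _ /existsP [f /andP [/injectiveP inj_f _]].
by have := leq_card _ inj_f; rewrite card_ord.
Qed.

Lemma odd_girth_le (T : finType) (e : rel T) l :
  has_odd_cycle_len e l -> exists2 g, odd_girth e = Some g & g <= l.
Proof.
move=> odd_l; have le_l_T := has_cycle_len_le_card (proj2 (andP odd_l)).
have le_find : find (has_odd_cycle_len e) (iota 0 #|T|.+1) <= l.
  rewrite leqNgt; apply/negP => /(before_find 0).
  by rewrite nth_iota ?add0n ?odd_l.
exists (find (has_odd_cycle_len e) (iota 0 #|T|.+1)) => //.
by rewrite /odd_girth (leq_trans le_find).
Qed.

Lemma odd_girth_Some (T : finType) (e : rel T) g :
  odd_girth e = Some g -> has_odd_cycle_len e g.
Proof.
rewrite /odd_girth; case: ifP => // le_find [<-].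
have has_odd : has (has_odd_cycle_len e) (iota 0 #|T|.+1) by rewrite has_find size_iota.
by have := nth_find 0 has_odd; rewrite nth_iota.
Qed.

Section OddCycles.
Variables (T : finType) (e : rel T).
Hypothesis eirr : irreflexive e.

Lemma not_uniq_split (s : seq T) :
  ~~ uniq s -> exists y s1 s2 s3, s = s1 ++ y :: s2 ++ y :: s3.
Proof.
elim: s => // x s IHs /=; rewrite negb_and negbK.
case/orP => [/splitPr [s2 s3] | /IHs [y [s1 [s2 [s3 ->]]]]].
  by exists x, [::], s2, s3.
by exists y, (x :: s1), s2, s3.
Qed.

Lemma cycle_split y (s1 s2 : seq T) :
  cycle e (y :: s1 ++ y :: s2) -> cycle e (y :: s1) /\ cycle e (y :: s2).
Proof.
by rewrite /= rcons_cat cat_path /= [path e y (rcons s1 y)]rcons_path => /and3P [-> -> ->].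
Qed.

Lemma uniq_cycle_has_cycle_len (c : seq T) :
  uniq c -> cycle e c -> 2 < size c -> has_cycle_len e (size c).
Proof.
case: c => // x c' uniq_c cyc_c size_c; rewrite /has_cycle_len size_c /=.
apply/existsP; exists [ffun i : 'I_(size c').+1 => nth x (x :: c') i].
apply/andP; split.
  apply/injectiveP => i j; rewrite !ffunE => /eqP.
  by rewrite nth_uniq // => /eqP /val_inj.
apply/forallP => i; rewrite !ffunE /=.
have /(pathP x) /(_ i) := cyc_c; rewrite size_rcons -rcons_cons => /(_ (ltn_ord i)).
rewrite !nth_rcons /= ltn_ord.
case: (ltngtP i (size c')) => [lt_i_c' | gt_i_c' | ->]; last by rewrite modnn.
  by rewrite modn_small.
by have := ltn_ord i; rewrite ltnNge gt_i_c'.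
Qed.

Lemma odd_cycle_shorten (c : seq T) : cycle e c -> odd (size c) ->
  exists2 l, l <= size c & has_odd_cycle_len e l.
Proof.
have [N] := ubnP (size c); elim: N c => // N IH c ltcN cyc_c odd_c.
have [uniq_c | /not_uniq_split [y [s1 [s2 [s3 def_c]]]]] := boolP (uniq c).
  exists (size c) => //; rewrite /has_odd_cycle_len odd_c uniq_cycle_has_cycle_len //.
  by case: c cyc_c odd_c {ltcN uniq_c} => [|x [|x' [|x'' c]]] //=; rewrite eirr.
have shorter s : cycle e s -> odd (size s) -> size s < size c ->
    exists2 l, l <= size c & has_odd_cycle_len e l.
  move=> cyc_s odd_s lt_s_c.
  have [l le_l_s odd_l] := IH s (leq_trans lt_s_c ltcN) cyc_s odd_s.
  by exists l => //; exact: leq_trans le_l_s (ltnW lt_s_c).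
have /cycle_split [cyc2 cyc3] : cycle e (y :: s2 ++ y :: s3 ++ s1).
  by rewrite -2!cat_cons catA cycle_catC -def_c.
have size_c : size c = size (y :: s2) + size (y :: s3 ++ s1).
  by rewrite def_c !size_cat /= !size_cat /=; lia.
have /orP [odd2 | odd3] : odd (size (y :: s2)) || odd (size (y :: s3 ++ s1)).
  by move: odd_c; rewrite size_c oddD; case: (odd (size _)).
  by apply: (shorter (y :: s2)) => //; rewrite size_c /=; lia.
by apply: (shorter (y :: s3 ++ s1)) => //; rewrite size_c /=; lia.
Qed.

End OddCycles.

Section LazyWalk.
Variables (T : eqType) (e : rel T) (w : nat -> T).

Definition walk_moves L := [seq w m.+1 | m <- iota 0 L & w m != w m.+1].

Lemma size_walk_moves L :
  size (walk_moves L) = count (fun m => w m != w m.+1) (iota 0 L).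
Proof. by rewrite size_map size_filter. Qed.

Lemma walk_moves_path L :
  (forall m, m < L -> w m != w m.+1 -> e (w m) (w m.+1)) ->
  path e (w 0) (walk_moves L) /\ last (w 0) (walk_moves L) = w L.
Proof.
elim: L => [|L IHL] step //.
have [path_L last_L] := IHL (fun m lt_mL => step m (ltnW lt_mL)).
rewrite /walk_moves -addn1 iotaD filter_cat map_cat cat_path last_cat /=.
rewrite -/(walk_moves L) path_L last_L.
rewrite add0n addn1; case: ifP => /= [moved | /negbFE/eqP -> //].
by rewrite step.
Qed.

End LazyWalk.

Lemma odd_count_changes (b : nat -> bool) L :
  odd (count (fun m => b m != b m.+1) (iota 0 L)) = (b 0 != b L).
Proof.
elim: L => [|L IHL]; first by rewrite eqxx.
rewrite -addn1 iotaD count_cat oddD IHL /= addn0 addn1.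
by case: (b 0); case: (b L); case: (b L.+1).
Qed.

Lemma log2R_le (m c : nat) : 0 < m -> m <= 2 ^ c -> Rle (log2R (INR m)) (INR c).
Proof.
move=> m_gt0 le_m_2c.
have ln2_gt0 : Rlt 0 (ln 2) by rewrite -ln_1; apply: ln_increasing; lra.
have INR_exp2 : INR (2 ^ c) = pow 2 c.
  by elim: c {le_m_2c} => // c IHc; rewrite expnS mult_INR IHc.
have m_pos : Rlt 0 (INR m) by apply/lt_0_INR/ltP.
have ln_m_le : Rle (ln (INR m)) (Rmult (INR c) (ln 2)).
  rewrite -ln_pow; last lra.
  rewrite -INR_exp2; case: (Rle_lt_or_eq_dec _ _ (le_INR _ _ (leP le_m_2c))) => [lt_m | ->].
    exact/Rlt_le/ln_increasing.
  exact: Rle_refl.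
rewrite /log2R; apply: (Rmult_le_reg_r (ln 2)) => //.
by rewrite /Rdiv Rmult_assoc Rinv_l; [rewrite Rmult_1_r | lra].
Qed.

Lemma star_adj_irr n (H : rel 'I_n) : irreflexive (star_adj H).
Proof.
move=> [[a b] /= ab_edge]; rewrite /star_adj /= orbb.
by case/andP: ab_edge => lt_ab _; apply: contraTF lt_ab => /eqP ->; rewrite ltnn.
Qed.

Lemma chi_le_exp2_chi_star n (H : rel 'I_n) :
  symmetric H -> irreflexive H -> chi H <= 2 ^ chi (star_adj H).
Proof.
move=> Hsym Hirr; set c := chi (star_adj H).
have /existsP [g /forallP proper_g] := chi_colorable (@star_adj_irr _ H).
pose colors_into x : {set 'I_c} :=
  [set g v | v in [pred v : star_vertex H | (sval v).2 == x]].
have colors_into_lt (x y : 'I_n) : x < y -> H x y -> colors_into x != colors_into y.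
  move=> lt_xy Hxy; have xy_edge : (x < y) && H x y by rewrite lt_xy Hxy.
  pose xy : star_vertex H := exist _ (x, y) xy_edge.
  apply/negP => /eqP same_colors.
  have : g xy \in colors_into y by apply/imsetP; exists xy; rewrite ?inE.
  rewrite -same_colors => /imsetP [v /eqP into_x gxy].
  by have /forallP/(_ xy) := proper_g v; rewrite /star_adj into_x eqxx gxy eqxx.
have card_sets : #|{set 'I_c}| = 2 ^ c.
  by rewrite -cardsT -powersetT card_powerset cardsT card_ord.
rewrite -card_sets; apply: (chi_le_card (h := colors_into)) => x y Hxy.
case: (ltngtP x y) => [lt_xy | lt_yx | /val_inj eq_xy].
- exact: colors_into_lt.
- by rewrite eq_sym; apply: colors_into_lt; rewrite // Hsym.
- by rewrite eq_xy Hirr in Hxy.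
Qed.

Section ShiftCycle.
Variables (n : nat) (H : rel 'I_n).
Hypotheses (Hsym : symmetric H) (Hirr : irreflexive H).
Variables (k : nat) (A B : nat -> 'I_n).
Hypotheses (ltAB : forall m, A m < B m) (H_AB : forall m, H (A m) (B m)).
Hypothesis shift_AB : forall m, (B m == A m.+1) || (B m.+1 == A m).
Hypotheses (A_periodic : forall m, A (m + k) = A m)
           (B_periodic : forall m, B (m + k) = B m).

Definition fwd m := B m == A m.+1.
Definition shift_walk m := if fwd m then B m else A m.

Lemma shift_walk_step m :
  if fwd m == fwd m.+1 then H (shift_walk m) (shift_walk m.+1)
  else shift_walk m == shift_walk m.+1.
Proof.
rewrite /shift_walk /fwd; have := shift_AB m.
case: (eqVneq (B m) (A m.+1)) => [fwd0 | _] /= back;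
  case: (eqVneq (B m.+1) (A m.+2)) => [fwd1 | _] /=.
- by rewrite fwd0.
- by rewrite fwd0.
- by rewrite eq_sym.
- by rewrite -(eqP back) Hsym.
Qed.

Lemma shift_walk_moved m : (shift_walk m != shift_walk m.+1) = (fwd m == fwd m.+1).
Proof.
have := shift_walk_step m; case: (fwd m == fwd m.+1) => [edge | /eqP ->].
  by apply: contraTneq edge => ->; rewrite Hirr.
by rewrite eqxx.
Qed.

Lemma fwd_periodic m : fwd (m + k) = fwd m.
Proof. by rewrite /fwd -addSn A_periodic B_periodic. Qed.

Lemma shift_walk_periodic m : shift_walk (m + k) = shift_walk m.
Proof. by rewrite /shift_walk fwd_periodic A_periodic B_periodic. Qed.

Lemma has_fwd_change : 0 < k -> has (fun m => fwd m != fwd m.+1) (iota 0 k).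
Proof.
move=> k_gt0; apply/negPn/negP => /hasPn no_change.
have fwd_const m : m <= k -> fwd m = fwd 0.
  elim: m => // m IHm lt_mk; rewrite -(IHm (ltnW lt_mk)).
  by have /negPn/eqP -> : ~~ (fwd m != fwd m.+1) by apply: no_change; rewrite mem_iota.
case fwd0: (fwd 0).
  have A_incr m : m <= k -> A 0 + m <= A m.
    elim: m => [|m IHm] lt_mk; first by rewrite addn0.
    have := fwd_const m (ltnW lt_mk); rewrite fwd0 /fwd => /eqP <-.
    by have := ltAB m; have := IHm (ltnW lt_mk); lia.
  by have := A_incr k (leqnn k); rewrite -{2}[k]add0n A_periodic; lia.
have B_decr m : m <= k -> B m + m <= B 0.
  elim: m => [|m IHm] lt_mk; first by rewrite addn0.
  have := shift_AB m; rewrite /fwd in fwd_const fwd0.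
  rewrite (fwd_const m (ltnW lt_mk)) fwd0 /= => /eqP ->.
  by have := ltAB m; have := IHm (ltnW lt_mk); lia.
by have := B_decr k (leqnn k); rewrite -{1}[k]add0n B_periodic; lia.
Qed.

Lemma shift_cycle_shorten : 0 < k -> odd k -> exists2 l, l < k & has_odd_cycle_len H l.
Proof.
move=> k_gt0 odd_k; set p := walk_moves shift_walk k.
have [path_p last_p] : path H (shift_walk 0) p /\ last (shift_walk 0) p = shift_walk k.
  apply: walk_moves_path => m _; rewrite shift_walk_moved => agree.
  by have := shift_walk_step m; rewrite agree.
have cyc_p : cycle H p.
  by rewrite (cycle_path (shift_walk 0)) last_p -[k]add0n shift_walk_periodic.
set changes := count (fun m => fwd m != fwd m.+1) (iota 0 k).
have size_p : size p + changes = k.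
  rewrite size_walk_moves (eq_count shift_walk_moved).
  rewrite -{2}(size_iota 0 k) -(count_predC (fun m => fwd m == fwd m.+1)).
  by congr (_ + _).
have even_changes : ~~ odd changes.
  by rewrite odd_count_changes -[k]add0n fwd_periodic eqxx.
have changes_gt0 : 0 < changes by rewrite -has_count has_fwd_change.
have odd_p : odd (size p) by move: odd_k; rewrite -size_p oddD (negbTE even_changes) addbF.
have [l le_l_p odd_l] := odd_cycle_shorten Hirr cyc_p odd_p.
by exists l => //; rewrite -size_p -addn1 leq_add.
Qed.

End ShiftCycle.

Lemma star_odd_cycle_shorten n (H : rel 'I_n) k :
  symmetric H -> irreflexive H -> has_odd_cycle_len (star_adj H) k ->
  exists2 l, l < k & has_odd_cycle_len H l.
Proof.
move=> Hsym Hirr /andP [odd_k /andP [k_gt2 /existsP [f /andP [_ /forallP adj_f]]]].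
have k_gt0 : 0 < k by exact: ltn_trans k_gt2.
pose idx m : 'I_k := Ordinal (ltn_pmod m k_gt0).
pose A m := (sval (f (idx m))).1; pose B m := (sval (f (idx m))).2.
have idx_periodic m : idx (m + k) = idx m by apply: val_inj; rewrite /= modnDr.
have edge_AB m : (A m < B m) && H (A m) (B m) := svalP (f (idx m)).
apply: (@shift_cycle_shorten n H Hsym Hirr k A B) => // [m | m | m | m | m].
- by case/andP: (edge_AB m).
- by case/andP: (edge_AB m).
- have idxS : ordS (idx m) = idx m.+1.
    by apply: val_inj; rewrite /= -[(m %% k).+1]addn1 modnDml addn1.
  by have := adj_f (idx m); rewrite idxS.
- by rewrite /A idx_periodic.
- by rewrite /B idx_periodic.
Qed.

Theorem mainTheorem13 (n : nat) (H : rel 'I_n)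
  (Hn : 2 <= n) (Hsym : symmetric H) (Hirr : irreflexive H) :
  Rle (log2R (INR (chi H))) (INR (chi (star_adj H)))
  /\ og_gt (odd_girth (star_adj H)) (odd_girth H).
Proof.
split.
  apply: log2R_le; last exact: chi_le_exp2_chi_star.
  exact: (chi_gt0 Hirr (Ordinal (ltnW Hn))).
case og_star: (odd_girth (star_adj H)) => [k|] //=.
have [l lt_lk odd_l] := star_odd_cycle_shorten Hsym Hirr (odd_girth_Some og_star).
have [g -> le_gl] := odd_girth_le odd_l.
exact: leq_ltn_trans le_gl lt_lk.
Qed.
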